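(* Let $\mathbb{F}$ be a field of characteristic not $2$. The map $w\mapsto w^3$ belongs to $SD(\mathbb{F})\setminus\operatorname{Aut}(\mathbb{F})$ if and only if $\mathbb{F}=\mathbb{F}_5$.
   Context: For fields $\mathbb{F},\widetilde{\mathbb{F}}$, a map $f:\mathbb{F}\to\widetilde{\mathbb{F}}$ is called an SD-map if for all $x\neq y$ in $\mathbb{F}$ one has $f(x)\neq f(y)$ and \[ f\left(\frac{x+y}{x-y}\right)=\frac{f(x)+f(y)}{f(x)-f(y)}. \] For a field $\mathbb{F}$, $SD(\mathbb{F})$ denotes the set of surjective SD-maps $f:\mathbb{F}\to\mathbb{F}$. $\operatorname{Aut}(\mathbb{F})$ is the group of field automorphisms of $\mathbb{F}$; $\mathbb{F}_5$ is the field with $5$ elements. *)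

From mathcomp Require Import all_boot all_algebra.
Set Implicit Arguments. Unset Strict Implicit. Unset Printing Implicit Defensive.
Import GRing.Theory.
Local Open Scope ring_scope.

Definition SD_map (F F' : fieldType) (f : F -> F') : Prop :=
  forall x y : F, x != y ->
    f x != f y /\ f ((x + y) / (x - y)) = (f x + f y) / (f x - f y).

Definition in_SD (F : fieldType) (f : F -> F) : Prop :=
  SD_map f /\ (forall z : F, exists x : F, f x = z).

Definition is_field_aut (F : fieldType) (f : F -> F) : Prop :=
  [/\ bijective f,
      (forall x y : F, f (x + y) = f x + f y),
      (forall x y : F, f (x * y) = f x * f y) & f 1 = 1].

Definition iso_to_F5 (F : fieldType) : Prop :=
  exists g : 'F_5 -> F, [/\ bijective g,
      (forall x y, g (x + y) = g x + g y),
      (forall x y, g (x * y) = g x * g y) & g 1 = 1].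

From HB Require Import structures.
From mathcomp Require Import all_boot all_algebra finfield ring.
Set Implicit Arguments. Unset Strict Implicit. Unset Printing Implicit Defensive.
Import GRing.Theory.
Local Open Scope ring_scope.

(* Cross-multiplying the SD equation of w |-> w^3 at (x, y) leaves
   6 (x^5 y - x y^5) = 0.  Cubing is additive exactly when 3 = 0, so if it is
   not an automorphism then 3 <> 0, and (x, y) = (2, 1) gives 180 = 0, i.e.
   characteristic 5; then y = 1 gives t^5 = t for every t, so F is the set of
   roots of X^5 - X, which is the prime field F_5.  Conversely, in F_5 cubing
   is an involution (t^9 = t) and the defect x^5 y - x y^5 vanishes. *)

Lemma inj_surj_bij (A : choiceType) (B : eqType) (f : A -> B) :
  injective f -> (forall z, exists x, f x = z) -> bijective f.
Proof.
move=> f_inj f_surj; have ex_pre z : exists x, f x == z.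
  by have [x <-] := f_surj z; exists x.
exists (fun z => xchoose (ex_pre z)) => [x|z]; last exact/eqP/(xchooseP (ex_pre z)).
by apply: f_inj; apply/eqP/(xchooseP (ex_pre (f x))).
Qed.

Section PrimeSubfield.
Variables (F : fieldType) (p : nat) (pcharFp : p \in [pchar F]).
(* pPrimeCharType is F viewed as an 'F_p-algebra; in_alg is a |-> a%:R. *)
Local Notation Fp_to_F := (GRing.in_alg (pPrimeCharType pcharFp)).

Lemma frobenius_fixed_in_prime_subfield (t : F) :
  t ^+ p = t -> exists a : 'F_p, Fp_to_F a = t.
Proof.
move=> tp; have p_pr := pcharf_prime pcharFp.
have := congr1 (map_poly Fp_to_F) (finField_genPoly 'F_p).
rewrite map_prod_XsubC rmorphB /= map_polyXn map_polyX card_Fp //.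
rewrite -big_enum -(big_map _ xpredT (fun x => 'X - x%:P)) => genP.
have : root ('X^p - 'X) t by rewrite rootE !hornerE tp subrr.
by rewrite genP root_prod_XsubC => /mapP[a _ ->]; exists a.
Qed.

End PrimeSubfield.

Lemma Fp_isoP (F : fieldType) (p : nat) : prime p ->
  (exists g : 'F_p -> F, [/\ bijective g, {morph g : x y / x + y},
                             {morph g : x y / x * y} & g 1 = 1])
  <-> p \in [pchar F] /\ forall t : F, t ^+ p = t.
Proof.
move=> p_pr; split=> [[g [g_bij gD gM g1]] | [pcharFp Fp_fixed]].
  have g0 : g 0 = 0 by apply: (addrI (g 0)); rewrite -gD !addr0.
  pose gR : {rmorphism 'F_p -> F} := HB.pack g
    (GRing.isNmodMorphism.Build _ _ g (g0, gD))
    (GRing.isMonoidMorphism.Build _ _ g (g1, gM)).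
  split; first by rewrite inE p_pr -(rmorph_nat gR) /= pchar_Fp_0 // g0 /=.
  move=> t; have [h _ hK] := g_bij; rewrite -(hK t) -(rmorphXn gR) /=.
  by rewrite -[in X in _ ^+ X](card_Fp p_pr) expf_card.
pose g : {rmorphism 'F_p -> pPrimeCharType pcharFp} := GRing.in_alg _.
exists g; split.
- apply: inj_surj_bij; first exact: (fmorph_inj g).
  by move=> t; apply: frobenius_fixed_in_prime_subfield; apply: Fp_fixed.
- exact: (rmorphD g).
- exact: (rmorphM g).
- exact: (rmorph1 g).
Qed.

Lemma cube_SD_defectE (R : comNzRingType) (x y : R) :
  (x + y) ^+ 3 * (x ^+ 3 - y ^+ 3) - (x ^+ 3 + y ^+ 3) * (x - y) ^+ 3
  = 6%:R * (x ^+ 5 * y - x * y ^+ 5).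
Proof. by ring. Qed.

Lemma SD_map_cubeP (F : fieldType) :
  SD_map (fun w : F => w ^+ 3) <->
  injective (fun w : F => w ^+ 3) /\
  forall x y : F, 6%:R * (x ^+ 5 * y - x * y ^+ 5) = 0.
Proof.
split=> [SD | [cube_inj defect0] x y neq_xy].
  split=> [x y eq3 | x y].
    by apply/eqP; apply: contraT => /SD[]; rewrite eq3 eqxx.
  have [->|neq_xy] := eqVneq x y; first by rewrite -exprSr -exprS subrr mulr0.
  have [neq3] := SD x y neq_xy; rewrite expr_div_n => /eqP.
  rewrite eqr_div ?expf_neq0 ?subr_eq0 // => /eqP SDxy.
  by rewrite -cube_SD_defectE SDxy subrr.
have neq3 : x ^+ 3 != y ^+ 3 by apply: contra neq_xy => /eqP/cube_inj->.
split=> //; rewrite expr_div_n; apply/eqP.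
rewrite eqr_div ?expf_neq0 ?subr_eq0 // -subr_eq0.
by rewrite cube_SD_defectE defect0.
Qed.

Lemma cube_field_autP (F : fieldType) : (2%:R : F) != 0 ->
  bijective (fun w : F => w ^+ 3) ->
  is_field_aut (fun w : F => w ^+ 3) <-> (3%:R : F) = 0.
Proof.
move=> two_neq0 cube_bij; split=> [[_ cubeD _ _] | three0].
  have : (2%:R * 3%:R : F) = (1 + 1) ^+ 3 - (1 ^+ 3 + 1 ^+ 3) by ring.
  rewrite -cubeD subrr => /eqP.
  by rewrite mulf_eq0 (negbTE two_neq0) => /eqP.
split=> // [x y | x y | ]; [ | exact: exprMn | exact: expr1n].
have -> : (x + y) ^+ 3 = x ^+ 3 + y ^+ 3 + 3%:R * (x * y * (x + y)) by ring.
by rewrite three0 mul0r addr0.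
Qed.

Lemma cube_involutive (R : pzSemiRingType) :
  (forall t : R, t ^+ 5 = t) -> involutive (fun t : R => t ^+ 3).
Proof.
move=> expr5id t; rewrite -exprM.
by rewrite (_ : 3 * 3 = 5 + 4)%N // exprD expr5id -exprS expr5id.
Qed.

Lemma cube_SD_defect0_pchar5 (F : fieldType) :
  (2%:R : F) != 0 -> (3%:R : F) != 0 ->
  (forall x y : F, 6%:R * (x ^+ 5 * y - x * y ^+ 5) = 0) ->
  5 \in [pchar F] /\ forall t : F, t ^+ 5 = t.
Proof.
move=> two_neq0 three_neq0 defect0.
have five0 : (5%:R : F) = 0.
  have : (2%:R * 2%:R * 3%:R * 3%:R * 5%:R : F) = 0.
    by rewrite -(defect0 2%:R 1); ring.
  by move/eqP; rewrite !mulf_eq0 (negbTE two_neq0) (negbTE three_neq0) => /eqP.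
split=> [|t]; first by rewrite inE five0 eqxx.
apply/eqP; rewrite -subr_eq0.
have -> : t ^+ 5 - t = 6%:R * (t ^+ 5 * 1 - t * 1 ^+ 5) - 5%:R * (t ^+ 5 - t).
  by ring.
by rewrite defect0 five0 mul0r subr0.
Qed.

Lemma pchar5_three_neq0 (F : fieldType) : 5 \in [pchar F] -> (3%:R : F) != 0.
Proof.
case/andP=> _ /eqP five0; apply/eqP => three0.
have : (1 : F) = 2%:R * 5%:R - 3%:R * 3%:R by ring.
by rewrite five0 three0 !mulr0 subrr => /eqP; rewrite oner_eq0.
Qed.

Theorem theorem1p6 (F : fieldType) (hchar : (2%:R : F) != 0) :
  (in_SD (fun w : F => w ^+ 3) /\ ~ is_field_aut (fun w : F => w ^+ 3))
  <-> iso_to_F5 F.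
Proof.
rewrite /iso_to_F5 Fp_isoP //.
split=> [[[SD cube_surj] not_aut] | [pchar5 expr5id]].
  have [cube_inj defect0] := (SD_map_cubeP F).1 SD.
  apply: cube_SD_defect0_pchar5 defect0 => //; apply/eqP.
  by move/(cube_field_autP hchar (inj_surj_bij cube_inj cube_surj)).
have cubeK := cube_involutive expr5id.
split; first split.
- apply/SD_map_cubeP; split; first exact: inv_inj cubeK.
  by move=> x y; rewrite !expr5id subrr mulr0.
- by move=> t; exists (t ^+ 3); apply: cubeK.
rewrite (cube_field_autP hchar (inv_bij cubeK)).
exact/eqP/pchar5_three_neq0.
Qed.
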